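(* For any configuration $G$, if $G$ is feasible then the algorithm Classifier outputs ''Yes'' when executed with $G$ as input.
   Context: Model. A configuration is a finite simple undirected connected graph $G$ with $n$ nodes, each node $v$ tagged with a non-negative integer $t_v$ (wakeup tag); smallest tag $0$, span $\sigma$ = largest tag. Nodes are anonymous and communicate in synchronous global rounds. A node $v$ wakes up in the first global round $r\le t_v$ in which it receives a message, if any, and otherwise in global round $t_v$; its local clock is $0$ in its wakeup round, it acts from local round $1$, and nodes do not know the global clock. In each round a node transmits a message to all neighbours, listens, or terminates. A listening node receives $M$ if exactly one neighbour transmits ($M$), hears collision noise (distinct from silence and messages) if at least two neighbours transmit, and silence otherwise; a transmitting node hears nothing. A DRIP is a common function mapping a node's history (what it heard in each local round $0,\ldots,i-1$, including whether/by which message it was woken) to its action in local round $i\ge1$, with every node eventually terminating permanently; a decision function maps each node's final history to $\{0,1\}$; a dedicated leader election algorithm for $G$ is a DRIP plus decision function such that exactly one node of $G$ outputs $1$; $G$ is feasible if one exists. Algorithm Classifier (centralized, input $G$): maintains a partition of the nodes into classes $\mathrm{class}(v)\in\{1,\ldots,\mathit{numClasses}\}$, initially all in class $1$. One iteration: for each node $v$, its label $L_v$ is the set of triples obtained as follows: for each neighbour $w$ with $\mathrm{class}(w)\ne\mathrm{class}(v)$ or $t_w\ne t_v$ form the pair $(\mathrm{class}(w),\sigma+1+t_w-t_v)$; for each distinct pair $(a,b)$ so formed, $L_v$ contains $(a,b,1)$ if exactly one neighbour yields it and $(a,b,* )$ otherwise. Then the partition is refined: two nodes share a new class iff they shared a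 class before and have equal labels. Main loop: for $i=1,\ldots,\lceil n/2\rceil$: record $\mathit{old}=\mathit{numClasses}$; do one iteration; if some class has exactly one node, output ''Yes'' and stop; else if the number of classes equals $\mathit{old}$, output ''No'' and stop. *)

From mathcomp Require Import all_boot.
Set Implicit Arguments. Unset Strict Implicit. Unset Printing Implicit Defensive.

Definition is_configuration (T : finType) (e : rel T) (t : T -> nat) : Prop :=
  [/\ symmetric e, irreflexive e, (forall x y : T, connect e x y)
    & exists v : T, t v = 0].

Definition span (T : finType) (t : T -> nat) : nat := \max_(v : T) t v.

(* What a node perceives in one local round: nothing (it transmitted),  *)
(* silence, collision noise, or a message.                              *)
Inductive obs (M : Type) : Type :=
  | ONothing | OSilence | ONoise | OMsg of M.
Arguments ONothing {M}. Arguments OSilence {M}. Arguments ONoise {M}.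

Inductive act (M : Type) : Type :=
  | ATransmit of M | AListen | ATerminate.
Arguments AListen {M}. Arguments ATerminate {M}.

(* A history is the sequence of observations of local rounds 0..i-1;   *)
(* entry 0 is what was heard in the wakeup round (a message iff the    *)
(* node was woken up by that message, or received it in round t_v).     *)
Definition history (M : Type) := seq (obs M).

Definition drip (M : Type) := history M -> act M.

Inductive nstate (M : Type) : Type :=
  | Asleep
  | Awake of history M
  | Done of history M.
Arguments Asleep {M}.

Definition transmits (M : Type) (A : drip M) (s : nstate M) : option M :=
  match s with
  | Awake h => match A h with ATransmit m => Some m | _ => None end
  | _ => None
  end.

Definition reception (T : finType) (M : Type) (e : rel T)
    (tx : T -> option M) (v : T) : obs M :=
  match pmap tx [seq w <- enum T | e v w] with
  | [::] => OSilence
  | [:: m] => OMsg m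
  | _ => ONoise
  end.

Definition step (T : finType) (M : Type) (e : rel T) (t : T -> nat)
    (A : drip M) (r : nat) (st : T -> nstate M) : T -> nstate M :=
  fun v =>
    let rc := reception e (fun w => transmits A (st w)) v in
    match st v with
    | Asleep =>
        if (r == t v) || (if rc is OMsg _ then true else false)
        then Awake [:: rc] else Asleep
    | Awake h =>
        match A h with
        | ATransmit _ => Awake (rcons h ONothing)
        | AListen => Awake (rcons h rc)
        | ATerminate => Done h
        end
    | Done h => Done h
    end.

Fixpoint exec (T : finType) (M : Type) (e : rel T) (t : T -> nat)
    (A : drip M) (r : nat) : T -> nstate M :=
  match r with
  | 0 => fun _ => Asleep
  | r'.+1 => step e t A r' (exec e t A r')
  end.

Definition dedicated_LE (T : finType) (e : rel T) (t : T -> nat)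
    (M : Type) (A : drip M) (dec : history M -> bool) : Prop :=
  exists (R : nat) (fh : T -> history M),
    (forall v, exec e t A R v = Done (fh v)) /\
    (exists! v : T, dec (fh v) = true).

Definition feasible (T : finType) (e : rel T) (t : T -> nat) : Prop :=
  exists (M : Type) (A : drip M) (dec : history M -> bool),
    dedicated_LE e t A dec.

(* Algorithm Classifier.  A class is named by the block of the         *)
(* partition (a {set T}); class v = block containing v.                *)
(* Label triples (a, b, star) : star = false means "1", true means "*". *)

Definition labK (T : finType) (t : T -> nat) : nat := (span t).*2.+2.

Definition label (T : finType) (e : rel T) (t : T -> nat)
    (cls : T -> {set T}) (v : T) : {set {set T} * 'I_(labK t) * bool} :=
  [set x : {set T} * 'I_(labK t) * bool | let: (a, b, star) := x in
     let c := #|[set w | [&& e v w, (cls w != cls v) || (t w != t v),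
                            cls w == a & (span t).+1 + t w - t v == val b]]| in
     (0 < c) && (star == (1 < c))].

Definition refine (T : finType) (e : rel T) (t : T -> nat)
    (cls : T -> {set T}) : T -> {set T} :=
  fun v => [set w | (cls w == cls v) && (label e t cls w == label e t cls v)].

Definition numClasses (T : finType) (cls : T -> {set T}) : nat :=
  #|[set cls v | v : T]|.

Definition has_singleton_class (T : finType) (cls : T -> {set T}) : bool :=
  [exists v : T, #|cls v| == 1].

(* k remaining iterations of the main loop; true = "Yes", false = "No". *)
(* (Falling out of the loop is read as "No"; it cannot happen.)         *)
Fixpoint classifier_loop (T : finType) (e : rel T) (t : T -> nat)
    (k : nat) (cls : T -> {set T}) : bool :=
  match k with
  | 0 => false
  | k'.+1 =>
      let old := numClasses cls in
      let cls' := refine e t cls in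
      if has_singleton_class cls' then true
      else if numClasses cls' == old then false
      else classifier_loop e t k' cls'
  end.

Definition classifier (T : finType) (e : rel T) (t : T -> nat) : bool :=
  classifier_loop e t (uphalf #|T|) (fun _ => [set: T]).

From mathcomp Require Import all_boot zify.
Set Implicit Arguments. Unset Strict Implicit. Unset Printing Implicit Defensive.

(* Call a partition of the nodes stable when nodes in a common class have equal
   labels.  In a connected configuration, the classes of a stable partition are
   tag-homogeneous, and two nodes of a class see, for every other class, no
   neighbour, exactly one neighbour, or several neighbours in it alike.  Hence,
   if every class transmits uniformly, every listening node of a class hears the
   same thing, and by induction on the rounds all nodes of a class have the same
   history under any DRIP: a class with two nodes cannot contain a unique
   leader.  If Classifier answers "No", the partition it stops with is stable
   (the refinement added no class) and has no singleton class. *)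

Section StablePartition.
Variables (T : finType) (e : rel T) (t : T -> nat).

Definition stable (c : T -> {set T}) :=
  forall u v, c u = c v -> label e t c u = label e t c v.

Definition nbset (c : T -> {set T}) (z : T) (a : {set T}) (k : nat) : {set T} :=
  [set w | [&& e z w, (c w != c z) || (t w != t z), c w == a
             & (span t).+1 + t w - t z == k]].

Lemma in_label c z a b s :
  ((a, b, s) \in label e t c z) =
  (0 < #|nbset c z a (val b)|) && (s == (1 < #|nbset c z a (val b)|)).
Proof. by rewrite inE. Qed.

Lemma tag_le_span v : t v <= span t.
Proof. exact: (@leq_bigmax _ (fun v => t v) v). Qed.

Lemma mem_nbset c z w : e z w -> (c w != c z) || (t w != t z) ->
  w \in nbset c z (c w) ((span t).+1 + t w - t z).
Proof. by move=> ezw ne; rewrite inE ezw ne !eqxx. Qed.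

Lemma nbset_offset_lt c z a k w : w \in nbset c z a k -> k < labK t.
Proof.
rewrite inE => /and4P [_ _ _ /eqP <-]; rewrite /labK.
have := tag_le_span w; lia.
Qed.

Variable c : T -> {set T}.
Hypothesis c_stable : stable c.

Lemma nbset_transfer x y a k w :
  c x = c y -> w \in nbset c x a k -> exists w', w' \in nbset c y a k.
Proof.
move=> cxy w_nb; have k_lt := nbset_offset_lt w_nb.
have gt0 : 0 < #|nbset c x a k| by apply/card_gt0P; exists w.
have : (a, Ordinal k_lt, 1 < #|nbset c x a k|) \in label e t c x.
  by rewrite in_label /= gt0 eqxx.
by rewrite (c_stable cxy) in_label => /andP [/card_gt0P].
Qed.

Lemma nbset_gt1_transfer x y a k :
  c x = c y -> 1 < #|nbset c x a k| -> 1 < #|nbset c y a k|.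
Proof.
move=> cxy gt1; have /card_gt0P [w /nbset_offset_lt k_lt] := ltnW gt1.
have : (a, Ordinal k_lt, true) \in label e t c x.
  by rewrite in_label /= gt1 ltnW.
by rewrite (c_stable cxy) in_label => /andP [_ /eqP <-].
Qed.

Lemma partner_step x x' w d : c x' = c x -> t x' + d = t x -> e x w ->
  exists2 w', c w' = c w & t w' + d = t w.
Proof.
move=> cx' tx' exw; case: (boolP ((c w != c x) || (t w != t x))) => [ne | ].
  have [w'] := nbset_transfer (esym cx') (mem_nbset exw ne).
  rewrite inE => /and4P [_ _ /eqP cw' /eqP off]; exists w' => //.
  move: off; have := tag_le_span x; have := tag_le_span x'; lia.
rewrite negb_or !negbK => /andP [/eqP cw /eqP tw].
by exists x'; [rewrite cw cx' | lia].
Qed.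

Hypothesis conf : is_configuration e t.

Lemma stable_same_tag u v : c u = c v -> t u = t v.
Proof.
wlog le_uv : u v / t u <= t v.
  move=> le_case cuv; case/orP: (leq_total (t u) (t v)) => le.
    exact: le_case.
  by symmetry; apply: le_case.
move=> cuv; have [e_sym _ connected [z tz0]] := conf.
pose d := t v - t u.
(* u is a partner of v, partners propagate along edges (partner_step), so
   the tag-0 node has one too, which forces d = 0. *)
pose has_partner := [pred x | [exists x', (c x' == c x) && (t x' + d == t x)]].
have partner_fwd x y : e x y -> x \in has_partner -> y \in has_partner.
  move=> exy /existsP [x' /andP [/eqP cx' /eqP tx']].
  have [y' cy' ty'] := partner_step cx' tx' exy.
  by apply/existsP; exists y'; rewrite cy' ty' !eqxx.
have partner_closed : closed e has_partner.
  by move=> x y exy; apply/idP/idP; apply: partner_fwd; rewrite // e_sym.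
have : z \in has_partner.
  rewrite -(closed_connect partner_closed (connected v z)).
  by apply/existsP; exists u; rewrite cuv eqxx /d subnKC ?eqxx.
by case/existsP=> z' /andP [_ /eqP]; rewrite tz0 /d; lia.
Qed.

End StablePartition.

Section Reception.
Variables (T : finType) (M : Type) (e : rel T) (tx : T -> option M).

Definition transmitters (v : T) : {set T} := [set w | e v w & isSome (tx w)].

Lemma size_pmap_neighbours v :
  size (pmap tx [seq w <- enum T | e v w]) = #|transmitters v|.
Proof.
rewrite enumT size_pmap count_filter cardE size_filter.
by apply: eq_count => w; rewrite !inE andbC.
Qed.

Lemma pmap_singleton (s : seq T) m :
  pmap tx s = [:: m] -> exists2 w, w \in s & tx w = Some m.
Proof.
elim: s => //= w s IH; case tw: (tx w) => [m'|] /=.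
  by case=> <- _; exists w; rewrite ?mem_head.
by move/IH => [w' w's tw']; exists w'; rewrite ?inE ?w's ?orbT.
Qed.

Variant reception_spec (v : T) : obs M -> Prop :=
  | ReceptionSilence of #|transmitters v| = 0 : reception_spec v OSilence
  | ReceptionMsg w m of transmitters v = [set w] & tx w = Some m :
      reception_spec v (OMsg m)
  | ReceptionNoise of 1 < #|transmitters v| : reception_spec v ONoise.

Lemma receptionP v : reception_spec v (reception e tx v).
Proof.
rewrite /reception; have := size_pmap_neighbours v.
case E: (pmap tx _) => [|m [|m' s]] /= card; first by constructor.
  have [w w_nb twm] := pmap_singleton E.
  have /cards1P [w' tr_w'] : #|transmitters v| == 1 by rewrite -card.
  have : w \in transmitters v.
    by rewrite inE twm andbT; move: w_nb; rewrite mem_filter => /andP [].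
  by rewrite tr_w' inE => /eqP w_eq; apply: ReceptionMsg tr_w' _; rewrite -w_eq.
by constructor; rewrite -card.
Qed.

End Reception.

Section ReceptionInvariance.
Variables (T : finType) (e : rel T) (t : T -> nat) (c : T -> {set T}).
Variables (M : Type) (tx : T -> option M).
Hypotheses (conf : is_configuration e t) (c_stable : stable e t c).
Hypothesis tx_class : forall w1 w2, c w1 = c w2 -> tx w1 = tx w2.

Local Notation tr := (transmitters e tx).

Lemma transmitter_nbset x w : tx x = None -> w \in tr x ->
  w \in nbset e t c x (c w) ((span t).+1 + t w - t x).
Proof.
rewrite inE => txN /andP [exw tw]; apply: mem_nbset => //.
by apply/orP; left; apply: contraTneq tw => /tx_class ->; rewrite txN.
Qed.

Lemma nbset_transmitter y k w w' : isSome (tx w) ->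
  w' \in nbset e t c y (c w) k -> w' \in tr y.
Proof. by move=> tw; rewrite !inE => /and4P [-> _ /eqP /tx_class ->]. Qed.

Lemma transmitter_transfer x y w : c x = c y -> tx x = None -> w \in tr x ->
  exists2 w', w' \in tr y & c w' = c w.
Proof.
move=> cxy txN w_tr; have w_nb := transmitter_nbset txN w_tr.
have [w' w'_nb] := nbset_transfer c_stable cxy w_nb; exists w'.
  by apply: nbset_transmitter w'_nb; case/setIdP: w_tr.
by move: w'_nb; rewrite inE => /and4P [_ _ /eqP].
Qed.

Lemma transmitters_gt1_transfer x y : c x = c y -> tx x = None ->
  1 < #|tr x| -> 1 < #|tr y|.
Proof.
move=> cxy txN /card_gt1P [w1 [w2 [w1_tr w2_tr ne12]]].
case: (eqVneq (c w1) (c w2)) => [c12 | c12].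
  have t12 := stable_same_tag c_stable conf c12.
  set k := (span t).+1 + t w1 - t x.
  have nb_gt1 : 1 < #|nbset e t c x (c w1) k|.
    apply/card_gt1P; exists w1, w2; rewrite transmitter_nbset //.
    by rewrite c12 /k t12 transmitter_nbset.
  have /card_gt1P [w1' [w2' [w1'_nb w2'_nb ne']]] :=
    nbset_gt1_transfer c_stable cxy nb_gt1.
  have tw1 : isSome (tx w1) by case/setIdP: w1_tr.
  apply/card_gt1P; exists w1', w2'.
  by split; [exact: nbset_transmitter w1'_nb | exact: nbset_transmitter w2'_nb |].
have [w1' w1'_tr c1] := transmitter_transfer cxy txN w1_tr.
have [w2' w2'_tr c2] := transmitter_transfer cxy txN w2_tr.
apply/card_gt1P; exists w1', w2'; split=> //.
by apply: contra_neq c12 => eq12; rewrite -c1 -c2 eq12.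
Qed.

Lemma reception_class_invariant x y : c x = c y -> tx x = None ->
  reception e tx x = reception e tx y.
Proof.
move=> cxy txN; have tyN : tx y = None by rewrite -(tx_class cxy).
have tr_gt0 : (0 < #|tr x|) = (0 < #|tr y|).
  apply/card_gt0P/card_gt0P=> [[w]|[w]].
    by case/(transmitter_transfer cxy txN) => w' ?; exists w'.
  by case/(transmitter_transfer (esym cxy) tyN) => w' ?; exists w'.
have tr_gt1 : (1 < #|tr x|) = (1 < #|tr y|).
  by apply/idP/idP; apply: transmitters_gt1_transfer.
case: receptionP tr_gt0 tr_gt1 => [x0 | w m trx txw | x_gt1];
  case: receptionP => [y0 | w' m' try tyw' | y_gt1];
  rewrite ?x0 ?y0 ?trx ?try ?cards1 ?x_gt1 ?y_gt1 //= => _ _.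
have w_tr : w \in tr x by rewrite trx set11.
have [w''] := transmitter_transfer cxy txN w_tr.
by rewrite try inE => /eqP -> /tx_class; rewrite txw tyw' => -[->].
Qed.

End ReceptionInvariance.

Lemma exec_class_invariant (T : finType) (e : rel T) (t : T -> nat) c
    (M : Type) (A : drip M) :
  is_configuration e t -> stable e t c ->
  forall r u v, c u = c v -> exec e t A r u = exec e t A r v.
Proof.
move=> conf c_stable; elim=> [//|r IH] u v cuv /=.
rewrite /step (IH u v cuv).
set tx := fun w => transmits A (exec e t A r w).
have rec_eq : tx v = None -> reception e tx u = reception e tx v.
  move=> txN; apply: (reception_class_invariant conf c_stable) => //.
    by move=> w1 w2 /IH; rewrite /tx => ->.
  by rewrite /tx (IH u v cuv).
case E: (exec e t A r v) rec_eq => [|h|h] rec_eq //.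
  have txN : tx v = None by rewrite /tx E.
  by rewrite (stable_same_tag c_stable conf cuv) (rec_eq txN).
case Ah: (A h) => //; have txN : tx v = None by rewrite /tx E /= Ah.
by rewrite (rec_eq txN).
Qed.

Section Refinement.
Variables (T : finType) (e : rel T) (t : T -> nat).

Definition class_map (c : T -> {set T}) := forall u v, (u \in c v) = (c u == c v).

Definition stable_without_singleton (c : T -> {set T}) :=
  [/\ class_map c, stable e t c & ~~ has_singleton_class c].

Lemma class_map_partition c :
  class_map c -> partition [set c v | v : T] [set: T].
Proof.
move=> cm; have -> : [set c v | v : T] = preim_partition c [set: T].
  apply/setP => A; apply/imsetP/imsetP => -[v _ ->]; exists v => //;
    by apply/setP => w; rewrite !inE cm eq_sym.
exact: preim_partitionP.
Qed.

Lemma class_map_card_classes c :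
  class_map c -> ~~ has_singleton_class c -> (numClasses c).*2 <= #|T|.
Proof.
move=> cm /existsPn no1.
rewrite -cardsT (card_partition (class_map_partition cm)) -mul2n mulnC.
rewrite -sum_nat_const; apply: leq_sum => _ /imsetP [v _ ->].
have : 0 < #|c v| by apply/card_gt0P; exists v; rewrite cm.
by move: (no1 v); case: #|c v| => [|[|]].
Qed.

Variable c : T -> {set T}.
Local Notation c' := (refine e t c).

Lemma refine_self v : v \in c' v.
Proof. by rewrite inE !eqxx. Qed.

Lemma refine_sub u v : u \in c' v -> c u = c v.
Proof. by rewrite inE => /andP [/eqP]. Qed.

Lemma refine_class_map : class_map c'.
Proof.
move=> u v; apply/idP/eqP => [|<-]; last exact: refine_self.
rewrite inE => /andP [/eqP cuv /eqP luv].
by apply/setP => w; rewrite !inE cuv luv.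
Qed.

Let merge (X : {set T}) := \bigcup_(x in X) c x.

Lemma merge_refine v : merge (c' v) = c v.
Proof.
apply/setP => w; apply/bigcupP/idP => [[x /refine_sub <-] //|].
by exists v; first exact: refine_self.
Qed.

Lemma classes_merge_refine : [set c v | v : T] = merge @: [set c' v | v : T].
Proof. by rewrite -imset_comp; apply: eq_imset => v /=; rewrite merge_refine. Qed.

Lemma numClasses_refine : numClasses c <= numClasses c'.
Proof. by rewrite /numClasses classes_merge_refine leq_imset_card. Qed.

Hypothesis c_class_map : class_map c.

Lemma refine_fixed :
  numClasses c' = numClasses c -> forall v, c' v = c v.
Proof.
rewrite /numClasses classes_merge_refine => /esym/eqP/imset_injP merge_inj v.
apply/setP => w; apply/idP/idP => [/refine_sub|].
  by rewrite c_class_map => ->.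
rewrite c_class_map => /eqP cwv.
have -> : c' v = c' w by apply: merge_inj; rewrite ?imset_f // !merge_refine cwv.
exact: refine_self.
Qed.

Lemma refine_fixed_stable_without_singleton :
  numClasses c' = numClasses c -> ~~ has_singleton_class c' ->
  stable_without_singleton c.
Proof.
move=> fixed no1; split=> //.
  move=> u v cuv; have : u \in c' v by rewrite refine_fixed // c_class_map cuv.
  by rewrite inE => /andP [_ /eqP].
apply: contraNN no1 => /existsP [v cv1].
by apply/existsP; exists v; rewrite refine_fixed.
Qed.

End Refinement.

(* Each iteration that does not stop adds a class, and a partition without
   singleton classes has at most #|T|/2 classes: the bound says that the
   remaining iterations suffice. *)
Lemma classifier_loop_false (T : finType) (e : rel T) (t : T -> nat) k c :
  class_map c -> #|T| < (numClasses c + k.+1).*2 ->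
  classifier_loop e t k.+1 c = false ->
  exists c0, stable_without_singleton e t c0.
Proof.
elim: k c => [|k IH] c cm bound /=; case: ifP => // /negbT no1.
all: case: ifP => [/eqP fixed _ | /negbT grew loop].
all: try by exists c; apply: refine_fixed_stable_without_singleton.
all: have lt_classes : numClasses c < numClasses (refine e t c)
       by rewrite ltn_neqAle eq_sym grew numClasses_refine.
all: have le_card := class_map_card_classes (refine_class_map e t c) no1.
  by exfalso; lia.
by apply: IH loop; [exact: refine_class_map | lia].
Qed.

Lemma stable_without_singleton_infeasible (T : finType) (e : rel T)
    (t : T -> nat) c :
  is_configuration e t -> stable_without_singleton e t c -> ~ feasible e t.
Proof.
move=> conf [cm c_stable /existsPn no1] [M [A [dec [R [fh [fh_exec]]]]]].
case=> l [l_dec l_uniq].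
have /card_gt0P [u /setD1P [u_ne u_cl]] : 0 < #|c l :\ l|.
  by move: (no1 l) (cardsD1 l (c l)); rewrite cm eqxx /=; lia.
move: u_cl; rewrite cm => /eqP /(exec_class_invariant A conf c_stable R).
rewrite !fh_exec => -[fh_ul].
by move: u_ne; rewrite -(l_uniq u) ?eqxx // fh_ul.
Qed.

Theorem lemma12 (T : finType) (e : rel T) (t : T -> nat) :
  is_configuration e t -> feasible e t -> classifier e t = true.
Proof.
move=> conf feas; case loop: (classifier e t) => //; exfalso.
have [_ _ _ [z _]] := conf.
have [n card_n] : exists n, #|T| = n.+1.
  by exists #|T|.-1; rewrite prednK //; apply/card_gt0P; exists z.
pose all_in_one (_ : T) := [set: T].
have init_class_map : class_map all_in_one.
  by move=> u v; rewrite /all_in_one !inE eqxx.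
have bound : #|T| < (numClasses all_in_one + (n./2).+1).*2.
  have : 0 < numClasses all_in_one.
    by apply/card_gt0P; exists (all_in_one z); apply/imsetP; exists z.
  by rewrite card_n; have := odd_double_half n; lia.
rewrite /classifier card_n in loop.
have [c0 c0_ok] := classifier_loop_false init_class_map bound loop.
exact: stable_without_singleton_infeasible conf c0_ok feas.
Qed.
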